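(* Let $R$ be an axis-aligned rectangle containing $O(n)$ sites in its interior, with $O(n)$ ports on its top side and right side. Let $W$ be the set of intersection points of the horizontal and vertical lines through the sites and ports. For $w\in W$, a candidate rectangle with bottom-left corner $w$ is an axis-aligned rectangle with bottom-left corner $w$ containing no site in its interior such that either (i) its right side passes through a site $s$ with $s_x>w_x$, $s_y>w_y$ and its top side lies on the horizontal line through a site lying above $s$, or (ii) symmetrically, its top side passes through a site $s$ with $s_x>w_x$, $s_y>w_y$ and its right side lies on the vertical line through a site lying to the right of $s$. Then the total number of distinct candidate rectangles over all $w\in W$ is $O(n^3)$.
   Context: For a point $p$, $p_x$ and $p_y$ denote its $x$- and $y$-coordinates. *)

From mathcomp Require Import all_boot all_order all_algebra.
Set Implicit Arguments. Unset Strict Implicit. Unset Printing Implicit Defensive.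
Import Order.TTheory GRing.Theory Num.Theory.
Local Open Scope ring_scope.

Section Defs.
Variable R : realFieldType.
Notation pt := (R * R)%type.

Definition in_open_rect (xl xr yb yt : R) (p : pt) : bool :=
  (xl < p.1) && (p.1 < xr) && (yb < p.2) && (p.2 < yt).

Definition on_top_or_right (xl xr yb yt : R) (p : pt) : bool :=
  ((p.2 == yt) && (xl <= p.1) && (p.1 <= xr)) ||
  ((p.1 == xr) && (yb <= p.2) && (p.2 <= yt)).

Definition in_W (sites ports : seq pt) (w : pt) : Prop :=
  exists p q, p \in sites ++ ports /\ q \in sites ++ ports /\ w = (p.1, q.2).

(* An axis-aligned rectangle is encoded by (bottom-left corner, top-right
   corner); [is_candidate sites w r] : r is a candidate rectangle with
   bottom-left corner w. *)
Definition is_candidate (sites : seq pt) (w : pt) (r : pt * pt) : Prop :=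
  let: (bl, tr) := r in
  [/\ bl = w, w.1 < tr.1, w.2 < tr.2,
      (forall s, s \in sites -> ~~ in_open_rect w.1 tr.1 w.2 tr.2 s) &
      ((exists s t, s \in sites /\ t \in sites /\ w.1 < s.1 /\ w.2 < s.2 /\
           s.1 = tr.1 /\ w.2 <= s.2 <= tr.2 /\ s.2 < t.2 /\ tr.2 = t.2)
       \/
       (exists s t, s \in sites /\ t \in sites /\ w.1 < s.1 /\ w.2 < s.2 /\
           s.2 = tr.2 /\ w.1 <= s.1 <= tr.1 /\ s.1 < t.1 /\ tr.1 = t.1))].

Definition is_candidate_any (sites ports : seq pt) (r : pt * pt) : Prop :=
  exists w, in_W sites ports w /\ is_candidate sites w r.

End Defs.

(* A candidate rectangle with corner w is pinned by a site on its right side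
   or on its top side.  If it is pinned on the right, its height determines it:
   the pinning site of a narrower empty rectangle of the same height would lie
   inside a wider one.  Symmetrically, a top-pinned candidate is determined by
   its width.  Heights and widths of candidates are site coordinates, so a
   candidate is determined by w (O(n^2) choices), the side it is pinned on and
   one site coordinate (O(n) choices). *)
From mathcomp Require Import all_boot all_order all_algebra.
From mathcomp Require Import ring.
Import Order.TTheory GRing.Theory Num.Theory.
Local Open Scope ring_scope.

Lemma uniq_leq_size_inj {T U : eqType} (f : T -> U) (s : seq T) (t : seq U) :
  uniq s -> {in s &, injective f} -> {subset map f s <= t} ->
  (size s <= size t)%N.
Proof.
move=> s_uniq f_inj fs_t; rewrite -(size_map f).
by apply: uniq_leq_size fs_t; rewrite map_inj_in_uniq.
Qed.

Section Candidates.
Context {R : realFieldType}.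
Notation pt := (R * R)%type.
Variable sites : seq pt.

Definition empty_rect (w tr : pt) : Prop :=
  forall s, s \in sites -> ~~ in_open_rect w.1 tr.1 w.2 tr.2 s.

Definition pinned_right (w tr : pt) : bool :=
  has (fun s => [&& w.1 < s.1, w.2 < s.2, s.1 == tr.1 & s.2 < tr.2]) sites.

Definition pinned_top (w tr : pt) : bool :=
  has (fun s => [&& w.1 < s.1, w.2 < s.2, s.2 == tr.2 & s.1 < tr.1]) sites.

Lemma pinned_right_empty_inj {w tr tr' : pt} :
  empty_rect w tr -> empty_rect w tr' ->
  pinned_right w tr -> pinned_right w tr' -> tr.2 = tr'.2 -> tr = tr'.
Proof.
case: tr tr' => [x y] [x' y'] /= empty empty'
  /hasP[s s_site] /and4P[s1 s2 /eqP sx sy]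
  /hasP[s' s'_site] /and4P[s1' s2' /eqP sx' sy'] /= eq_y.
rewrite /= in sx sy sx' sy'; subst y'.
congr pair; case: (ltgtP x x') => // [lt_xx'|lt_x'x].
- by have := empty' s s_site; rewrite /in_open_rect /= s1 s2 sx lt_xx' sy.
- by have := empty s' s'_site; rewrite /in_open_rect /= s1' s2' sx' lt_x'x sy'.
Qed.

Lemma pinned_top_empty_inj {w tr tr' : pt} :
  empty_rect w tr -> empty_rect w tr' ->
  pinned_top w tr -> pinned_top w tr' -> tr.1 = tr'.1 -> tr = tr'.
Proof.
case: tr tr' => [x y] [x' y'] /= empty empty'
  /hasP[s s_site] /and4P[s1 s2 /eqP sy sx]
  /hasP[s' s'_site] /and4P[s1' s2' /eqP sy' sx'] /= eq_x.
rewrite /= in sx sy sx' sy'; subst x'.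
congr pair; case: (ltgtP y y') => // [lt_yy'|lt_y'y].
- by have := empty' s s_site; rewrite /in_open_rect /= s1 s2 sx sy lt_yy' andbT.
- by have := empty s' s'_site; rewrite /in_open_rect /= s1' s2' sx' sy' lt_y'y andbT.
Qed.

Section OneCandidate.
Context {w tr : pt}.
Hypothesis cand : is_candidate sites w (w, tr).

Lemma candidate_empty : empty_rect w tr.
Proof. by case: cand. Qed.

Lemma candidate_pinned : pinned_right w tr || pinned_top w tr.
Proof.
case: cand => _ _ _ _ [] [s [t [s_site [_ [s1 [s2 [sx [_ [st ty]]]]]]]]].
- by apply/orP; left; apply/hasP; exists s; rewrite // s1 s2 sx ty st eqxx.
- by apply/orP; right; apply/hasP; exists s; rewrite // s1 s2 sx ty st eqxx.
Qed.

Lemma candidate_width_site : tr.1 \in [seq s.1 | s <- sites].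
Proof.
case: cand => _ _ _ _ [] [s [t [s_site [t_site [_ [_ [sx [_ [_ tx]]]]]]]]].
- by rewrite -sx map_f.
- by rewrite tx map_f.
Qed.

Lemma candidate_height_site : tr.2 \in [seq s.2 | s <- sites].
Proof.
case: cand => _ _ _ _ [] [s [t [s_site [t_site [_ [_ [sy [_ [_ ty]]]]]]]]].
- by rewrite ty map_f.
- by rewrite -sy map_f.
Qed.

End OneCandidate.

Definition site_coords : seq R := [seq s.1 | s <- sites] ++ [seq s.2 | s <- sites].

Definition candidate_key (r : pt * pt) : pt * (bool * R) :=
  if pinned_right r.1 r.2 then (r.1, (true, r.2.2)) else (r.1, (false, r.2.1)).

Lemma candidate_key_inj (w w' : pt) (r r' : pt * pt) :
  is_candidate sites w r -> is_candidate sites w' r' ->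
  candidate_key r = candidate_key r' -> r = r'.
Proof.
case: r r' => [bl tr] [bl' tr'] cand cand'.
case: (cand) (cand') => corner _ _ _ _ [corner' _ _ _ _]; subst bl bl'.
have [empty empty'] := (candidate_empty cand, candidate_empty cand').
rewrite /candidate_key /=.
case: ifP => right_tr; case: ifP => right_tr' // [eq_w eq_tr]; subst w'.
- by rewrite (pinned_right_empty_inj empty empty' right_tr right_tr' eq_tr).
- have := candidate_pinned cand; have := candidate_pinned cand'.
  rewrite right_tr right_tr' /= => top_tr' top_tr.
  by rewrite (pinned_top_empty_inj empty empty' top_tr top_tr' eq_tr).
Qed.

Definition key_range (W : seq pt) : seq (pt * (bool * R)) :=
  [seq (w, bv) | w <- W, bv <- [seq (b, v) | b <- [:: true; false], v <- site_coords]].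

Lemma candidate_key_mem (W : seq pt) (w : pt) (r : pt * pt) :
  w \in W -> is_candidate sites w r -> candidate_key r \in key_range W.
Proof.
case: r => bl tr wW cand; case: (cand) => corner _ _ _ _; subst bl.
have height_coord : tr.2 \in site_coords.
  by rewrite mem_cat (candidate_height_site cand) orbT.
have width_coord : tr.1 \in site_coords.
  by rewrite mem_cat (candidate_width_site cand).
rewrite /candidate_key /=; case: ifP => _; apply: allpairs_f wW _.
- by rewrite mem_cat map_f.
- by rewrite !mem_cat map_f ?orbT.
Qed.

Definition grid_points (ports : seq pt) : seq pt :=
  [seq (p.1, q.2) | p <- sites ++ ports, q <- sites ++ ports].

Lemma in_W_grid_points (ports : seq pt) (w : pt) :
  in_W sites ports w -> w \in grid_points ports.
Proof. by case=> p [q [p_in [q_in ->]]]; apply: allpairs_f. Qed.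

Lemma size_candidates {ports : seq pt} {cands : seq (pt * pt)} :
  uniq cands -> (forall r, r \in cands -> is_candidate_any sites ports r) ->
  (size cands <= (size sites + size ports) ^ 2 * (2 * (2 * size sites)))%N.
Proof.
move=> cands_uniq cands_cand.
have -> : ((size sites + size ports) ^ 2 * (2 * (2 * size sites)))%N =
          size (key_range (grid_points ports)).
  by rewrite !size_allpairs /= /site_coords !size_cat !size_map addnn -mul2n mulnn.
apply: (uniq_leq_size_inj candidate_key) cands_uniq _ _.
  move=> r r' /cands_cand[w [_ cand]] /cands_cand[w' [_ cand']].
  exact: candidate_key_inj cand cand'.
move=> _ /mapP[r /cands_cand[w [/in_W_grid_points w_W cand]] ->].
exact: candidate_key_mem w_W cand.
Qed.

End Candidates.

Theorem lemma4 (R : realFieldType) (c : nat) :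
  exists C : nat, forall (n : nat) (xl xr yb yt : R)
    (sites ports : seq (R * R)) (cands : seq ((R * R) * (R * R))),
    xl < xr -> yb < yt ->
    (size sites <= c * n)%N -> (size ports <= c * n)%N ->
    (forall s, s \in sites -> in_open_rect xl xr yb yt s) ->
    (forall p, p \in ports -> on_top_or_right xl xr yb yt p) ->
    uniq cands ->
    (forall r, r \in cands -> is_candidate_any sites ports r) ->
    (size cands <= C * n ^ 3)%N.
Proof.
(* The bound does not depend on where the sites and ports lie. *)
exists (16 * c ^ 3)%N => n xl xr yb yt sites ports cands _ _ sites_n ports_n _ _.
move=> cands_uniq cands_cand.
apply: leq_trans (size_candidates sites cands_uniq cands_cand) _.
have -> : (16 * c ^ 3 * n ^ 3 = (c * n + c * n) ^ 2 * (2 * (2 * (c * n))))%N by ring.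
by rewrite leq_mul ?leq_exp2r ?leq_add ?leq_mul2l.
Qed.
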